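(* Let $\Phi=(A;A^*;\{E_i\}_{i=0}^d;\{E^*_i\}_{i=0}^d)$ be a Leonard system in $\mathcal A$, with $x_i$ and $p_i$ as defined below. Then $x_1x_2\cdots x_i\neq 0$ and $$E^*_i=\frac{p_i(A)\,E^*_0\,p_i(A)}{x_1x_2\cdots x_i}\qquad(0\le i\le d).$$
   Context: Let $\mathbb K$ be a field, $d\ge 0$ an integer, and $\mathcal A$ a $\mathbb K$-algebra isomorphic to the full matrix algebra $\mathrm{Mat}_{d+1}(\mathbb K)$; $I$ is its identity. An element of $\mathcal A$ is multiplicity-free if it has $d+1$ mutually distinct eigenvalues in $\mathbb K$. If $A$ is multiplicity-free with eigenvalues $\theta_0,\dots,\theta_d$, the primitive idempotent of $A$ associated with $\theta_i$ is $E_i=\prod_{j\ne i}(A-\theta_jI)/(\theta_i-\theta_j)$. A Leonard system in $\mathcal A$ is a sequence $\Phi=(A;A^*;\{E_i\}_{i=0}^d;\{E^*_i\}_{i=0}^d)$ such that (i) $A,A^*\in\mathcal A$ are multiplicity-free; (ii) $E_0,\dots,E_d$ is an ordering of the primitive idempotents of $A$; (iii) $E^*_0,\dots,E^*_d$ is an ordering of the primitive idempotents of $A^*$; (iv) $E_iA^*E_j=0$ if $|i-j|>1$ and $E_iA^*E_j\ne0$ if $|i-j|=1$ ($0\le i,j\le d$); (v) $E^*_iAE^*_j=0$ if $|i-j|>1$ and $E^*_iAE^*_j\ne0$ if $|i-j|=1$ ($0\le i,j\le d$). Here $A^*$ is merely notation (not an adjoint). Define $a_i=\mathrm{tr}(E^*_iA)$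 ($0\le i\le d$), $x_i=\mathrm{tr}(E^*_iAE^*_{i-1}A)$ ($1\le i\le d$), $x_0=0$. Define polynomials $p_0,\dots,p_{d+1}\in\mathbb K[\lambda]$ by $p_{-1}=0$, $p_0=1$, and $\lambda p_i=p_{i+1}+a_ip_i+x_ip_{i-1}$ for $0\le i\le d$. The empty product $x_1\cdots x_0$ equals $1$. *)

(* The algebra \mathcal A is taken to be Mat_{d+1}(K) itself. *)
From HB Require Import structures.
From mathcomp Require Import all_boot all_order all_algebra.
Set Implicit Arguments. Unset Strict Implicit. Unset Printing Implicit Defensive.
Import GRing.Theory.
Local Open Scope ring_scope.

Section LS.
Variables (K : fieldType) (d : nat).
Local Notation n := d.+1.

Definition prim_idem (A : 'M[K]_n) (th : 'I_n -> K) (i : 'I_n) : 'M[K]_n :=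
  \prod_(j < n | j != i) ((th i - th j)^-1 *: (A - (th j)%:M)).

Definition idem_ordering (A : 'M[K]_n) (E : 'I_n -> 'M[K]_n) : Prop :=
  exists th : 'I_n -> K,
    injective th /\ (forall i, eigenvalue A (th i)) /\
    (forall i, E i = prim_idem A th i).

Definition multiplicity_free (A : 'M[K]_n) : Prop :=
  exists th : 'I_n -> K, injective th /\ (forall i, eigenvalue A (th i)).

Definition tridiag_cond (E : 'I_n -> 'M[K]_n) (B : 'M[K]_n) : Prop :=
  forall i j : 'I_n,
    (((i.+1 < j)%N || (j.+1 < i)%N) -> E i *m B *m E j = 0) /\
    (((i.+1 == j) || (j.+1 == i)) -> E i *m B *m E j != 0).

Definition leonard_system (A As : 'M[K]_n) (E Es : 'I_n -> 'M[K]_n) : Prop :=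
  multiplicity_free A /\ multiplicity_free As /\
  idem_ordering A E /\ idem_ordering As Es /\
  tridiag_cond E As /\ tridiag_cond Es A.

Definition LS_a (A : 'M[K]_n) (Es : 'I_n -> 'M[K]_n) (i : nat) : K :=
  \tr (Es (inord i) *m A).

Definition LS_x (A : 'M[K]_n) (Es : 'I_n -> 'M[K]_n) (i : nat) : K :=
  match i with
  | 0 => 0
  | i'.+1 => \tr (Es (inord i) *m A *m Es (inord i') *m A)
  end.

(* pair (p_{i-1}, p_i) from the recurrence lambda p_i = p_{i+1} + a_i p_i + x_i p_{i-1} *)
Fixpoint ppair (a x : nat -> K) (i : nat) : {poly K} * {poly K} :=
  match i with
  | 0 => (0, 1)
  | i'.+1 => let pr := ppair a x i' in
             (pr.2, ('X - (a i')%:P) * pr.2 - x i' *: pr.1)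
  end.

Definition LS_p (A : 'M[K]_n) (Es : 'I_n -> 'M[K]_n) (i : nat) : {poly K} :=
  (ppair (LS_a A Es) (LS_x A Es) i).2.

End LS.

From HB Require Import structures.
From mathcomp Require Import all_boot all_order all_algebra.
Set Implicit Arguments.
Unset Strict Implicit.
Unset Printing Implicit Defensive.
Import GRing.Theory.
Local Open Scope ring_scope.

(* Each E*_i has rank one, so E*_i X E*_i = tr(E*_i X) E*_i.
   Combined with the tridiagonality of A with respect to the E*_i, this shows
   that v_i := E*_i A E*_{i-1} A ... A E*_0 (down_word i) and
   w_i := E*_0 A E*_1 ... A E*_i (up_word i) obey the three-term recurrence
   of the p_i, whence p_i(A) E*_0 = v_i and E*_0 p_i(A) = w_i.  Then
   p_i(A) E*_0 p_i(A) = v_i w_i, which telescopes to x_1 ... x_i E*_i.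
   Finally x_i = tr(E*_i A E*_{i-1} A) is nonzero because both E*_i A E*_{i-1}
   and E*_{i-1} A E*_i are nonzero rank-one matrices. *)

Lemma sum_nat_tridiag_window (V : nmodType) (F : nat -> V) k N :
  (k.+2 <= N)%N -> (forall j, (k.+1 < j)%N || (j.+1 < k)%N -> F j = 0) ->
  \sum_(j < N) F j = F k.+1 + F k + (if k is k'.+1 then F k' else 0).
Proof.
move=> kN F0; rewrite -(big_mkord xpredT) (@big_cat_nat _ _ _ k.+2) //=.
have -> : \sum_(k.+2 <= j < N) F j = 0.
  by rewrite big_nat_cond big1 // => j /andP[/andP[lt_kj _] _]; apply: F0; rewrite lt_kj.
rewrite addr0 !big_nat_recr //= -addrA addrC [F k + _]addrC; congr (_ + _).
case: k F0 {kN} => [|k] F0; first by rewrite big_geq.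
rewrite big_nat_recr //= big_nat_cond big1 ?add0r // => j /andP[/andP[_ lt_jk] _].
by apply: F0; rewrite ltnS lt_jk orbT.
Qed.

Lemma eq_ppair (K : fieldType) (a x a' x' : nat -> K) k :
  (forall j, (j < k)%N -> a j = a' j /\ x j = x' j) -> ppair a x k = ppair a' x' k.
Proof.
elim: k => [//|k IHk] eq_ax /=.
rewrite IHk => [|j lt_jk]; last by apply: eq_ax; rewrite ltnS ltnW.
by have [-> ->] := eq_ax k (ltnSn k).
Qed.

Section PrimitiveIdempotents.
Variables (K : fieldType) (d : nat).
Local Notation n := d.+1.

Lemma mulmx_horner_eigen m (B : 'M[K]_n) (E : 'M[K]_(m, n)) t :
  E *m B = t *: E -> forall p, E *m horner_mx B p = p.[t] *: E.
Proof.
move=> EB; elim/poly_ind => [|p c IHp].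
  by rewrite rmorph0 mulmx0 horner0 scale0r.
rewrite rmorphD rmorphM /= horner_mx_X horner_mx_C -mulmxE mulmxDr mulmxA IHp.
by rewrite -scalemxAl EB mul_mx_scalar scalerA hornerMXaddC scalerDl.
Qed.

Variables (B : 'M[K]_n) (th : 'I_n -> K).
Hypothesis th_inj : injective th.
Hypothesis th_eigen : forall i, eigenvalue B (th i).

Definition lagrange_poly (i : 'I_n) : {poly K} :=
  \prod_(j < n | j != i) ((th i - th j)^-1 *: ('X - (th j)%:P)).

Lemma prim_idem_horner i : prim_idem B th i = horner_mx B (lagrange_poly i).
Proof.
rewrite /prim_idem /lagrange_poly rmorph_prod; apply: eq_bigr => j _ /=.
by rewrite horner_mxZ rmorphB /= horner_mx_X horner_mx_C.
Qed.

Lemma horner_lagrange_poly i k : (lagrange_poly i).[th k] = (i == k)%:R.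
Proof.
rewrite /lagrange_poly horner_prod; have [<-|/negPf neq_ik] := eqVneq i k.
  apply: big1 => j neq_ji; rewrite hornerZ hornerXsubC mulVf // subr_eq0.
  by apply: contra neq_ji => /eqP/th_inj ->.
rewrite (bigD1 k) 1?eq_sym ?neq_ik //= hornerZ hornerXsubC subrr mulr0 mul0r //.
Qed.

(* The th k are all the roots of char_poly B, so \prod_k ('X - th k) is
   associate to it and Cayley-Hamilton applies. *)
Lemma horner_mx_eq0 q : (forall k, root q (th k)) -> horner_mx B q = 0.
Proof.
set r := [seq th k | k <- enum 'I_n].
have dvd_r q' : (forall k, root q' (th k)) -> \prod_(z <- r) ('X - z%:P) %| q'.
  move=> rootq'; apply: uniq_roots_dvdp; last first.
    by rewrite uniq_rootsE map_inj_uniq ?enum_uniq.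
  by apply/allP => _ /mapP[k _ ->].
move=> /dvd_r /dvdpP[s ->].
have : \prod_(z <- r) ('X - z%:P) %= char_poly B.
  rewrite -dvdp_size_eqp; first by rewrite size_prod_XsubC size_char_poly size_map size_enum_ord.
  by apply: dvd_r => k; rewrite -eigenvalue_root_char.
case/andP => _ /dvdpP[s' ->].
by rewrite !rmorphM /= Cayley_Hamilton !mulr0.
Qed.

Lemma prim_idem_eigen i : prim_idem B th i *m B = th i *: prim_idem B th i.
Proof.
apply/eqP; rewrite -subr_eq0 -mul_mx_scalar -mulmxBr prim_idem_horner.
have -> : B - (th i)%:M = horner_mx B ('X - (th i)%:P).
  by rewrite rmorphB /= horner_mx_X horner_mx_C.
rewrite mulmxE -rmorphM; apply/eqP/horner_mx_eq0 => k.
rewrite /root hornerM hornerXsubC horner_lagrange_poly.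
by have [->|_] := eqVneq i k; rewrite ?subrr ?mulr0 ?mul0r.
Qed.

Lemma prim_idem_mul i j :
  prim_idem B th i *m prim_idem B th j = if i == j then prim_idem B th i else 0.
Proof.
rewrite [prim_idem B th j]prim_idem_horner.
rewrite (mulmx_horner_eigen (prim_idem_eigen i)) horner_lagrange_poly eq_sym.
by case: eqP => _; rewrite ?scale1r ?scale0r.
Qed.

Lemma sum_prim_idem : \sum_i prim_idem B th i = 1.
Proof.
apply/eqP; rewrite -subr_eq0.
have -> : \sum_i prim_idem B th i - 1 = horner_mx B (\sum_i lagrange_poly i - 1).
  rewrite rmorphB rmorph_sum rmorph1 /=.
  by congr (_ - _); apply: eq_bigr => i _; rewrite prim_idem_horner.
apply/eqP/horner_mx_eq0 => k.
rewrite /root hornerD hornerN hornerC horner_sum (bigD1 k) //= big1.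
  by rewrite horner_lagrange_poly eqxx addr0 subrr.
by move=> j /negPf neq_jk; rewrite horner_lagrange_poly neq_jk.
Qed.

Lemma prim_idem_neq0 i : prim_idem B th i != 0.
Proof.
have /eigenvalueP[v vB nz_v] := th_eigen i.
apply: contraNneq nz_v => E0.
have := mulmx_horner_eigen vB (lagrange_poly i).
by rewrite -prim_idem_horner E0 mulmx0 horner_lagrange_poly eqxx scale1r => <-.
Qed.

(* The n eigenspaces are nonzero and their sum is direct in an n-dimensional
   space, so each of them is a line. *)
Lemma mxrank_prim_idem i : \rank (prim_idem B th i) = 1%N.
Proof.
apply/eqP; rewrite eqn_leq lt0n mxrank_eq0 prim_idem_neq0 andbT.
have sub_eig : (prim_idem B th i <= eigenspace B (th i))%MS.
  by apply/eigenspaceP/prim_idem_eigen.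
apply: leq_trans (mxrankS sub_eig) _.
have := mxdirect_sum_eigenspace B (P := predT) (a_ := th) (in2W th_inj).
rewrite mxdirectE /= => /eqP rank_sum.
have bound := rank_leq_col (\sum_(j | predT j) eigenspace B (th j))%MS.
rewrite rank_sum (bigD1 i) //= in bound.
have lower : (d <= \sum_(j | j != i) \rank (eigenspace B (th j)))%N.
  apply: (@leq_trans (\sum_(j | j != i) 1%N)); first by rewrite sum1_card cardC1 card_ord.
  by apply: leq_sum => j _; rewrite lt0n mxrank_eq0; apply: th_eigen.
by rewrite -(leq_add2r d) add1n (leq_trans _ bound) ?leq_add2l.
Qed.

End PrimitiveIdempotents.

Section RankOne.
Variables (K : fieldType) (n : nat).

Lemma mul_col_mx11_row (u : 'cV[K]_n) (s : 'M[K]_1) (r : 'rV[K]_n) :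
  u *m s *m r = s 0 0 *: (u *m r).
Proof. by rewrite {1}[s]mx11_scalar mul_mx_scalar scalemxAl. Qed.

Lemma mxrank1_factor (E : 'M[K]_n) :
  \rank E = 1%N -> exists u : 'cV[K]_n, exists r : 'rV[K]_n, E = u *m r.
Proof.
move=> rkE; have := mulmx_base E; move: (col_base E) (row_base E).
by rewrite rkE => u r defE; exists u, r.
Qed.

Lemma mxrank1_sandwich (E X : 'M[K]_n) :
  \rank E = 1%N -> E *m X *m E = \tr (E *m X) *: E.
Proof.
move=> /mxrank1_factor[u [r ->]].
have -> : u *m r *m X *m (u *m r) = u *m (r *m X *m u) *m r by rewrite !mulmxA.
by rewrite mul_col_mx11_row -trace_mx11 mxtrace_mulC mulmxA.
Qed.

Lemma mxrank1_tr_neq0 (E F X : 'M[K]_n) : \rank E = 1%N -> \rank F = 1%N ->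
  E *m X *m F != 0 -> F *m X *m E != 0 -> \tr (E *m X *m F *m X) != 0.
Proof.
move=> /mxrank1_factor[u [r ->]] /mxrank1_factor[u' [r' ->]].
have -> : u *m r *m X *m (u' *m r') = (r *m X *m u') 0 0 *: (u *m r').
  by rewrite -mul_col_mx11_row !mulmxA.
have -> : u' *m r' *m X *m (u *m r) = (r' *m X *m u) 0 0 *: (u' *m r).
  by rewrite -mul_col_mx11_row !mulmxA.
move=> nz_EXF nz_FXE.
rewrite -scalemxAl mxtraceZ -[u *m r' *m X]mulmxA mxtrace_mulC trace_mx11 mulf_neq0 //.
  by apply: contraNneq nz_EXF => ->; rewrite scale0r.
by apply: contraNneq nz_FXE => ->; rewrite scale0r.
Qed.

End RankOne.

Section TridiagonalIdempotents.
Variables (K : fieldType) (d : nat).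
Local Notation n := d.+1.
Variables (A : 'M[K]_n) (E : nat -> 'M[K]_n).
Hypothesis E_mul : forall j k, E j *m E k = if j == k then E k else 0.
Hypothesis E_sum : forall N, (n <= N)%N -> \sum_(j < N) E j = 1%:M.
Hypothesis E_tridiag :
  forall j k, (k.+1 < j)%N || (j.+1 < k)%N -> E j *m A *m E k = 0.
Hypothesis E_sandwich : forall k X, E k *m X *m E k = \tr (E k *m X) *: E k.

Definition coef_a k := \tr (E k *m A).
Definition coef_x k := if k is k'.+1 then \tr (E k *m A *m E k' *m A) else 0.

Fixpoint down_word k := if k is k'.+1 then E k *m A *m down_word k' else E 0.
Fixpoint up_word k := if k is k'.+1 then up_word k' *m A *m E k else E 0.

Lemma down_wordS k : down_word k.+1 = E k.+1 *m A *m down_word k.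
Proof. by []. Qed.

Lemma up_wordS k : up_word k.+1 = up_word k *m A *m E k.+1.
Proof. by []. Qed.

Lemma mulmx_A_E k : A *m E k = E k.+1 *m A *m E k + E k *m A *m E k +
  (if k is k'.+1 then E k' *m A *m E k else 0).
Proof.
rewrite -{1}(mul1mx (A *m E k)) -(E_sum (leq_addr k.+2 n)) mulmx_suml.
under eq_bigr do rewrite mulmxA.
by apply: sum_nat_tridiag_window => [|j /E_tridiag]; rewrite ?leq_addl.
Qed.

Lemma mulmx_E_A k : E k *m A = E k *m A *m E k.+1 + E k *m A *m E k +
  (if k is k'.+1 then E k *m A *m E k' else 0).
Proof.
rewrite -{1}(mulmx1 (E k *m A)) -(E_sum (leq_addr k.+2 n)) mulmx_sumr.
by apply: sum_nat_tridiag_window => [|j]; rewrite ?leq_addl // orbC => /E_tridiag.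
Qed.

Lemma E_down_word k : E k *m down_word k = down_word k.
Proof. by case: k => [|k] /=; rewrite ?mulmxA E_mul eqxx. Qed.

Lemma up_word_E k : up_word k *m E k = up_word k.
Proof. by case: k => [|k] /=; rewrite -?mulmxA E_mul eqxx. Qed.

Lemma coef_xE k : \tr (E k *m A *m E k.+1 *m A) = coef_x k.+1.
Proof. by rewrite /coef_x -mulmxA mxtrace_mulC !mulmxA. Qed.

Lemma down_word_rec k :
  A *m down_word k = down_word k.+1 + coef_a k *: down_word k + coef_x k *: down_word k.-1.
Proof.
rewrite -{1}E_down_word mulmxA mulmx_A_E !mulmxDl; congr (_ + _ + _).
- by rewrite -mulmxA E_down_word.
- by rewrite E_sandwich -scalemxAl E_down_word.
case: k => [|k]; first by rewrite mul0mx scale0r.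
have sandwich := E_sandwich k (A *m E k.+1 *m A).
rewrite !mulmxA coef_xE in sandwich.
rewrite down_wordS !mulmxA -(mulmxA _ (E k.+1) (E k.+1)) E_mul eqxx.
by rewrite -(E_down_word k) !mulmxA sandwich -scalemxAl E_down_word.
Qed.

Lemma up_word_rec k :
  up_word k *m A = up_word k.+1 + coef_a k *: up_word k + coef_x k *: up_word k.-1.
Proof.
rewrite -{1}up_word_E -mulmxA mulmx_E_A !mulmxDr; congr (_ + _ + _).
- by rewrite !mulmxA up_word_E.
- by rewrite E_sandwich -scalemxAr up_word_E.
case: k => [|k]; first by rewrite mulmx0 scale0r.
have sandwich := E_sandwich k (A *m E k.+1 *m A).
rewrite !mulmxA coef_xE in sandwich.
rewrite up_wordS !mulmxA -(mulmxA _ (E k.+1) (E k.+1)) E_mul eqxx.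
rewrite -{1}(up_word_E k) -!mulmxA; rewrite -!mulmxA in sandwich.
by rewrite sandwich -scalemxAr up_word_E.
Qed.

Lemma down_up_word k : down_word k *m up_word k = (\prod_(1 <= j < k.+1) coef_x j) *: E k.
Proof.
elim: k => [|k IHk]; first by rewrite big_geq //= E_mul eqxx scale1r.
have sandwich := E_sandwich k.+1 (A *m E k *m A); rewrite !mulmxA in sandwich.
rewrite down_wordS up_wordS !mulmxA -(mulmxA _ (down_word k)) IHk.
by rewrite -scalemxAr -!scalemxAl sandwich scalerA [in RHS]big_nat_recr.
Qed.

Lemma horner_ppair_E0 k :
  horner_mx A (ppair coef_a coef_x k).2 *m E 0 = down_word k /\
  horner_mx A (ppair coef_a coef_x k).1 *m E 0 = (if k is k'.+1 then down_word k' else 0).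
Proof.
elim: k => [|k [IH2 IH1]] /=; first by rewrite rmorph1 rmorph0 mul1mx mul0mx.
split=> //.
rewrite rmorphB rmorphM /= horner_mxZ rmorphB /= horner_mx_X horner_mx_C.
rewrite -down_wordS mulmxBl -mulmxE -mulmxA IH2.
rewrite -scalemxAl IH1 mulmxBl down_word_rec mul_scalar_mx.
by case: k {IH1 IH2} => [|k]; rewrite ?scale0r ?subr0 ?addr0 ?addrK // addrAC !addrK.
Qed.

Lemma E0_horner_ppair k :
  E 0 *m horner_mx A (ppair coef_a coef_x k).2 = up_word k /\
  E 0 *m horner_mx A (ppair coef_a coef_x k).1 = (if k is k'.+1 then up_word k' else 0).
Proof.
elim: k => [|k [IH2 IH1]] /=; first by rewrite rmorph1 rmorph0 mulmx1 mulmx0.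
split=> //.
rewrite mulrC rmorphB rmorphM /= horner_mxZ rmorphB /= horner_mx_X horner_mx_C.
rewrite -up_wordS mulmxBr -mulmxE mulmxA IH2.
rewrite -scalemxAr IH1 mulmxBr up_word_rec mul_mx_scalar.
by case: k {IH1 IH2} => [|k]; rewrite ?scale0r ?subr0 ?addr0 ?addrK // addrAC !addrK.
Qed.

Lemma horner_ppair_sandwich k :
  horner_mx A (ppair coef_a coef_x k).2 *m E 0 *m horner_mx A (ppair coef_a coef_x k).2
  = (\prod_(1 <= j < k.+1) coef_x j) *: E k.
Proof.
have [down _] := horner_ppair_E0 k; have [up _] := E0_horner_ppair k.
have idem0 : E 0 *m E 0 = E 0 by rewrite E_mul.
by rewrite -idem0 mulmxA down -mulmxA up down_up_word.
Qed.

End TridiagonalIdempotents.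

Section LeonardIdempotents.
Variables (K : fieldType) (d : nat).
Local Notation n := d.+1.
Variables (A As : 'M[K]_n) (Es : 'I_n -> 'M[K]_n) (th : 'I_n -> K).
Hypothesis th_inj : injective th.
Hypothesis th_eigen : forall i, eigenvalue As (th i).
Hypothesis Es_prim : forall i, Es i = prim_idem As th i.
Hypothesis Es_tridiag : tridiag_cond Es A.

(* E*_k indexed by nat and extended by 0 beyond d, so that the recurrences
   below need no boundary cases. *)
Definition Es_nat k := if (k < n)%N then Es (inord k) else 0.

Lemma Es_nat_ord (i : 'I_n) : Es_nat i = Es i.
Proof. by rewrite /Es_nat ltn_ord inord_val. Qed.

Lemma Es_nat_out k : (n <= k)%N -> Es_nat k = 0.
Proof. by move=> ge_kn; rewrite /Es_nat ltnNge ge_kn. Qed.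

Lemma Es_nat_prim k : (k < n)%N -> Es_nat k = prim_idem As th (inord k).
Proof. by rewrite /Es_nat Es_prim => ->. Qed.

Lemma Es_nat_mul j k : Es_nat j *m Es_nat k = if j == k then Es_nat k else 0.
Proof.
have [lt_kn|ge_kn] := ltnP k n; last by rewrite (Es_nat_out ge_kn) mulmx0 if_same.
have [lt_jn|ge_jn] := ltnP j n; last first.
  rewrite (Es_nat_out ge_jn) mul0mx; case: eqP => // eq_jk.
  by move: lt_kn; rewrite -eq_jk ltnNge ge_jn.
rewrite !Es_nat_prim // prim_idem_mul // -val_eqE /= !inordK //.
by case: eqP => // ->.
Qed.

Lemma Es_nat_sum N : (n <= N)%N -> \sum_(j < N) Es_nat j = 1%:M.
Proof.
move=> le_nN; rewrite -(big_mkord xpredT) (@big_cat_nat _ _ _ n) //=.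
have -> : \sum_(n <= j < N) Es_nat j = 0.
  by rewrite big_nat_cond big1 // => j /andP[/andP[ge_jn _] _]; apply: Es_nat_out.
rewrite addr0 big_mkord (eq_bigr _ (fun i _ => Es_nat_ord i)).
by rewrite (eq_bigr _ (fun i _ => Es_prim i)) sum_prim_idem.
Qed.

Lemma Es_nat_tridiag j k :
  (k.+1 < j)%N || (j.+1 < k)%N -> Es_nat j *m A *m Es_nat k = 0.
Proof.
move=> far_jk; have [lt_jn|ge_jn] := ltnP j n; last first.
  by rewrite (Es_nat_out ge_jn) !mul0mx.
have [lt_kn|ge_kn] := ltnP k n; last by rewrite (Es_nat_out ge_kn) mulmx0.
rewrite /Es_nat lt_jn lt_kn; apply: (Es_tridiag _ _).1.
by rewrite !inordK // orbC.
Qed.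

Lemma Es_nat_adjacent_neq0 k : (k.+1 < n)%N ->
  Es_nat k.+1 *m A *m Es_nat k != 0 /\ Es_nat k *m A *m Es_nat k.+1 != 0.
Proof.
move=> lt_k1n; have lt_kn := ltnW lt_k1n.
rewrite /Es_nat lt_k1n lt_kn; split; apply: (Es_tridiag _ _).2.
  by rewrite !inordK // eqxx orbT.
by rewrite !inordK // eqxx.
Qed.

Lemma mxrank_Es_nat k : (k < n)%N -> \rank (Es_nat k) = 1%N.
Proof. by move=> lt_kn; rewrite Es_nat_prim // mxrank_prim_idem. Qed.

Lemma Es_nat_sandwich k X :
  Es_nat k *m X *m Es_nat k = \tr (Es_nat k *m X) *: Es_nat k.
Proof.
have [lt_kn|ge_kn] := ltnP k n.
  by rewrite mxrank1_sandwich ?mxrank_Es_nat.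
by rewrite (Es_nat_out ge_kn) !mul0mx scaler0.
Qed.

Lemma LS_a_Es_nat j : (j < n)%N -> LS_a A Es j = coef_a A Es_nat j.
Proof. by rewrite /LS_a /coef_a /Es_nat => ->. Qed.

Lemma LS_x_Es_nat j : (j < n)%N -> LS_x A Es j = coef_x A Es_nat j.
Proof. by case: j => // j lt_jn; rewrite /coef_x /Es_nat lt_jn (ltnW lt_jn). Qed.

Lemma LS_p_Es_nat (i : 'I_n) :
  LS_p A Es i = (ppair (coef_a A Es_nat) (coef_x A Es_nat) i).2.
Proof.
rewrite /LS_p (eq_ppair (a' := coef_a A Es_nat) (x' := coef_x A Es_nat)) // => j lt_ji.
have lt_jn := ltn_trans lt_ji (ltn_ord i).
by rewrite LS_a_Es_nat ?LS_x_Es_nat.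
Qed.

Lemma LS_x_neq0 k : (0 < k < n)%N -> LS_x A Es k != 0.
Proof.
case: k => // k /andP[_ lt_k1n]; rewrite LS_x_Es_nat //.
have [nz_down nz_up] := Es_nat_adjacent_neq0 lt_k1n.
by apply: mxrank1_tr_neq0 nz_down nz_up; rewrite mxrank_Es_nat // ltnW.
Qed.

Lemma prod_LS_x_neq0 (i : 'I_n) : \prod_(1 <= k < i.+1) LS_x A Es k != 0.
Proof.
rewrite prodf_seq_neq0; apply/allP => k; rewrite mem_index_iota => /andP[gt0_k lt_ki].
by rewrite LS_x_neq0 // gt0_k (leq_trans lt_ki (ltn_ord i)).
Qed.

Lemma horner_LS_p_sandwich (i : 'I_n) :
  horner_mx A (LS_p A Es i) *m Es ord0 *m horner_mx A (LS_p A Es i) =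
  (\prod_(1 <= k < i.+1) LS_x A Es k) *: Es i.
Proof.
rewrite LS_p_Es_nat -(Es_nat_ord ord0) -Es_nat_ord.
rewrite (horner_ppair_sandwich Es_nat_mul Es_nat_sum Es_nat_tridiag Es_nat_sandwich).
congr (_ *: _); apply: eq_big_nat => k /andP[_ lt_ki].
by rewrite LS_x_Es_nat // (leq_trans lt_ki (ltn_ord i)).
Qed.

End LeonardIdempotents.

Theorem lemma8p6 (K : fieldType) (d : nat) (A As : 'M[K]_d.+1)
  (E Es : 'I_d.+1 -> 'M[K]_d.+1) :
  leonard_system A As E Es ->
  forall i : 'I_d.+1,
    (\prod_(1 <= k < i.+1) LS_x A Es k != 0) /\
    Es i = (\prod_(1 <= k < i.+1) LS_x A Es k)^-1 *:
             (horner_mx A (LS_p A Es i) *m Es ord0 *m horner_mx A (LS_p A Es i)).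
Proof.
move=> [_ [_ [_ [[th [th_inj [th_eigen Es_prim]]] [_ Es_tridiag]]]]] i.
have nz_prod := prod_LS_x_neq0 th_inj th_eigen Es_prim Es_tridiag i.
split=> //.
by rewrite (horner_LS_p_sandwich th_inj th_eigen Es_prim Es_tridiag) scalerA mulVf ?scale1r.
Qed.
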